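(* Let $R$ be a commutative ring with $1\neq 0$, $S\subseteq R$ a multiplicatively closed subset, and $M$ a faithful $S$-strong comultiplication $R$-module. If $N$ is a submodule of $M$ with $N\ll^{S}M$, then there exist an ideal $I$ of $R$ with $I\leq^{S}_{e}R$ and $t\in S$ such that $t(0:_{M}I)\leq N\leq (0:_{M}I)$.
   Context: All rings are commutative with $1\neq 0$ and all modules are unital. A multiplicatively closed subset (m.c.s.) $S$ of $R$ is a subset with $0\notin S$, $1\in S$, and $ss'\in S$ for all $s,s'\in S$. For an ideal $I$ of $R$, $(0:_M I)=\{m\in M: Im=0\}$; $\mathrm{Ann}_R(X)=\{r\in R: rX=0\}$; $M$ is faithful if $\mathrm{Ann}_R(M)=0$. A submodule $N\leq M$ is $S$-small in $M$ ($N\ll^{S}M$) if for every submodule $L$ of $M$ and $s\in S$, $sM\leq N+L$ implies $tM\leq L$ for some $t\in S$. $N$ is $S$-essential in $M$ ($N\leq^{S}_{e}M$) if for every submodule $L$ of $M$ with $N\cap L=0$ there is $s\in S$ with $sL=0$; for ideals this is applied to $M=R$. $M$ is an $S$-comultiplication module if for each submodule $N$ of $M$ there exist $s\in S$ and an ideal $I$ of $R$ with $s(0:_M I)\subseteq N\subseteq (0:_M I)$. $M$ satisfies the $S$-double annihilator condition ($S$-DAC) if for each ideal $I$ of $R$ there is $s\in S$ with $s\,\mathrm{Ann}_R((0:_M I))\subseteq I$. $M$ is an $S$-strong comultiplication module if it is an $S$-comultiplication module satisfying the $S$-DAC. *)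

From mathcomp Require Import all_boot all_algebra.
Set Implicit Arguments. Unset Strict Implicit. Unset Printing Implicit Defensive.
Import GRing.Theory.
Local Open Scope ring_scope.

(* Subsets are Prop-valued predicates (submodules/ideals may be infinite). *)
Section Defs.
Variables (R : comNzRingType) (M : lmodType R).

Definition is_submod (N : M -> Prop) : Prop :=
  [/\ N 0, (forall x y, N x -> N y -> N (x + y)) & (forall (r : R) x, N x -> N (r *: x))].

Definition is_ideal (I : R -> Prop) : Prop :=
  [/\ I 0, (forall x y, I x -> I y -> I (x + y)) & (forall r x, I x -> I (r * x))].

Definition mcs (S : R -> Prop) : Prop :=
  [/\ ~ S 0, S 1 & forall s s', S s -> S s' -> S (s * s')].

Definition colonM (I : R -> Prop) : M -> Prop :=
  fun m => forall r, I r -> r *: m = 0.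

Definition annR (X : M -> Prop) : R -> Prop :=
  fun r => forall m, X m -> r *: m = 0.

Definition faithful : Prop := forall r : R, (forall m : M, r *: m = 0) -> r = 0.

Definition S_small (S : R -> Prop) (N : M -> Prop) : Prop :=
  forall (L : M -> Prop) (s : R), is_submod L -> S s ->
    (forall m : M, exists a b, N a /\ L b /\ s *: m = a + b) ->
    exists t, S t /\ forall m : M, L (t *: m).

Definition S_comult (S : R -> Prop) : Prop :=
  forall N : M -> Prop, is_submod N ->
    exists (s : R) (I : R -> Prop), [/\ S s, is_ideal I,
      (forall m, colonM I m -> N (s *: m)) & (forall m, N m -> colonM I m)].

Definition S_DAC (S : R -> Prop) : Prop :=
  forall I : R -> Prop, is_ideal I ->
    exists s, S s /\ forall r, annR (colonM I) r -> I (s * r).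

Definition S_strong_comult (S : R -> Prop) : Prop := S_comult S /\ S_DAC S.

End Defs.

Definition S_essential_ideal (R : comNzRingType) (S : R -> Prop) (I : R -> Prop) : Prop :=
  forall J : R -> Prop, is_ideal J -> (forall x, I x -> J x -> x = 0) ->
    exists s, S s /\ forall x, J x -> s * x = 0.

From mathcomp Require Import all_boot all_algebra.
Set Implicit Arguments. Unset Strict Implicit. Unset Printing Implicit Defensive.
Import GRing.Theory.
Local Open Scope ring_scope.

(* Apply the S-comultiplication property to N: this gives s in S
   and an ideal I with s(0:_M I) <= N <= (0:_M I); it remains to see that I is
   S-essential.  Let J be an ideal with I /\ J = 0.  The submodule
   K = (0:_M I) + (0:_M J) is of the form s1(0:_M I') <= K <= (0:_M I'); the
   S-DAC turns (0:_M I) <= (0:_M I') and (0:_M J) <= (0:_M I') into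
   s2 I' <= I and s3 I' <= J, so s2 s3 I' <= I /\ J = 0, whence
   s1 s2 s3 M <= K.  Multiplying by s gives s s1 s2 s3 M <= N + (0:_M J), so
   S-smallness of N yields t in S with t M <= (0:_M J), i.e. t J M = 0, and
   faithfulness gives t J = 0.
   The file first collects facts on colon submodules and sums, then proves
   that (0:_M I) + (0:_M J) is S-full when I /\ J = 0, and finally derives
   the S-essentiality of I and the theorem. *)

Section ColonSubmodules.
Variables (R : comNzRingType) (M : lmodType R).

Lemma colon_submod (I : R -> Prop) : is_submod (colonM (M:=M) I).
Proof.
split.
- by move=> r _; rewrite scaler0.
- by move=> x y Hx Hy r Ir; rewrite scalerDr Hx // Hy // addr0.
- by move=> r x Hx r' Ir'; rewrite scalerA mulrC -scalerA Hx // scaler0.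
Qed.

Definition sum_sub (N L : M -> Prop) : M -> Prop :=
  fun m => exists a b, [/\ N a, L b & m = a + b].

Lemma sum_submod (N L : M -> Prop) :
  is_submod N -> is_submod L -> is_submod (sum_sub N L).
Proof.
move=> [N0 ND NZ] [L0 LD LZ]; split.
- by exists 0, 0; rewrite addr0.
- move=> _ _ [a [b [Na Lb ->]]] [a' [b' [Na' Lb' ->]]].
  by exists (a + a'), (b + b'); rewrite addrACA; split; [apply: ND|apply: LD|].
- move=> r _ [a [b [Na Lb ->]]].
  by exists (r *: a), (r *: b); rewrite scalerDr; split; [apply: NZ|apply: LZ|].
Qed.

Lemma sum_subl (N L : M -> Prop) m : is_submod L -> N m -> sum_sub N L m.
Proof. by case=> L0 _ _ Nm; exists m, 0; rewrite addr0. Qed.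

Lemma sum_subr (N L : M -> Prop) m : is_submod N -> L m -> sum_sub N L m.
Proof. by case=> N0 _ _ Lm; exists 0, m; rewrite add0r. Qed.

(* If (0:_M I) <= (0:_M I'), then I' annihilates (0:_M I); with the S-DAC
   this gives s I' <= I for some s in S. *)
Lemma DAC_colon_sub (S : R -> Prop) (I I' : R -> Prop) :
  S_DAC M S -> is_ideal I ->
  (forall m, colonM (M:=M) I m -> colonM I' m) ->
  exists s, S s /\ forall r, I' r -> I (s * r).
Proof.
move=> dac idI sub; have [s [Ss Hs]] := dac I idI.
by exists s; split=> // r I'r; apply: Hs => m /sub; apply.
Qed.

Lemma faithful_colon_full (J : R -> Prop) t :
  faithful M -> (forall m : M, colonM J (t *: m)) -> forall x, J x -> t * x = 0.
Proof.
by move=> faith Ht x Jx; apply: faith => m; rewrite mulrC -scalerA; apply: Ht.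
Qed.

End ColonSubmodules.

Section StrongComultiplication.
Variables (R : comNzRingType) (M : lmodType R) (S : R -> Prop).
Hypothesis S_mul : forall s s', S s -> S s' -> S (s * s').
Hypothesis comult : S_comult M S.
Hypothesis dac : S_DAC M S.

Lemma colon_sum_S_full (I J : R -> Prop) :
  is_ideal I -> is_ideal J -> (forall x, I x -> J x -> x = 0) ->
  exists u, S u /\
    forall m : M, sum_sub (colonM I) (colonM J) (u *: m).
Proof.
move=> idI idJ IJ0.
have subK := sum_submod (colon_submod M I) (colon_submod M J).
have [s1 [I' [Ss1 _ HK1 HK2]]] := comult subK.
have [s2 [Ss2 sI'I]] : exists s2, S s2 /\ forall r, I' r -> I (s2 * r).
  apply: (DAC_colon_sub dac idI) => m Im; apply: HK2.
  by apply: sum_subl => //; apply: colon_submod.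
have [s3 [Ss3 sI'J]] : exists s3, S s3 /\ forall r, I' r -> J (s3 * r).
  apply: (DAC_colon_sub dac idJ) => m Jm; apply: HK2.
  by apply: sum_subr => //; apply: colon_submod.
have kill_I' : forall r, I' r -> s2 * s3 * r = 0.
  move=> r I'r; have [_ _ IM] := idI; have [_ _ JM] := idJ.
  apply: IJ0; first by rewrite mulrAC mulrC; apply: IM; apply: sI'I.
  by rewrite -mulrA; apply: JM; apply: sI'J.
exists (s1 * (s2 * s3)); split; first by apply: S_mul => //; apply: S_mul.
move=> m; rewrite -scalerA; apply: HK1 => r I'r.
by rewrite scalerA (mulrC r) kill_I' // scale0r.
Qed.

(* If N is S-small and s(0:_M I) <= N for some s in S, then the ideal I is
   S-essential (faithfulness turns t M <= (0:_M J) into t J = 0). *)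
Lemma small_colon_essential (N : M -> Prop) (I : R -> Prop) (s : R) :
  faithful M -> S_small S N -> is_ideal I -> S s ->
  (forall m, colonM I m -> N (s *: m)) -> S_essential_ideal S I.
Proof.
move=> faith small idI Ss HsI J idJ IJ0.
have [u [Su Hu]] := colon_sum_S_full idI idJ IJ0.
have [t [St Ht]] : exists t, S t /\ forall m : M, colonM J (t *: m).
  apply: (small _ (s * u) (colon_submod M J)); first exact: S_mul.
  move=> m; have [a [b [Ia Jb Hab]]] := Hu m.
  exists (s *: a), (s *: b); split; first exact: HsI; split.
  - by have [_ _ JZ] := colon_submod M J; apply: JZ.
  - by rewrite -scalerDr -Hab scalerA.
by exists t; split=> //; apply: (faithful_colon_full faith Ht).
Qed.

End StrongComultiplication.

Theorem proposition2p4 (R : comNzRingType) (M : lmodType R) (S : R -> Prop)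
  (N : M -> Prop) :
  mcs S -> faithful M -> S_strong_comult M S ->
  is_submod N -> S_small S N ->
  exists (I : R -> Prop) (t : R),
    [/\ is_ideal I, S_essential_ideal S I, S t,
        (forall m : M, colonM I m -> N (t *: m)) &
        (forall m : M, N m -> colonM I m)].
Proof.
move=> [_ _ S_mul] faith [comult dac] subN small.
have [s [I [Ss idI HsI HNI]]] := comult N subN.
exists I, s; split=> //.
exact: (small_colon_essential S_mul comult dac faith small idI Ss HsI).
Qed.
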